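(* Let $\mu,\sigma>0$, $T>0$, $K\in\mathbb{N}$ and $\Gamma>0$ satisfy $\mu\sqrt{kT/K}/\sigma\le\Gamma$ for all $k\in\{1,\dots,K\}$. Let \[\mathcal{U}_1=\Big\{r\in\mathbb{R}^K:\Big|\tfrac{\sum_{\ell=1}^k\log(1+r_\ell)-\mu kT/K}{\sigma\sqrt{kT/K}}\Big|\le\Gamma,\ \forall k\in\{1,\dots,K\}\Big\},\] \[\mathcal{W}=\Big\{r\in\mathbb{R}^K:\max_{k'\in\{k+1,\dots,K\}}\Big|\tfrac{\sum_{\ell=1}^k\log(1+r_\ell)-\mu k'T/K}{\sigma\sqrt{k'T/K}}\Big|-\Gamma\le0,\ \forall k\in\{1,\dots,K\}\Big\},\] and $\mathcal{U}'_1=\mathcal{U}_1\cap\mathcal{W}$. Then the worst-case risk measure $\rho$ using the uncertainty set $\mathcal{U}'_1$ satisfies both the bounded market risk assumption and the bounded conditional market risk assumption.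
   Context: Returns $r=(r_1,\dots,r_K)$ of a risky asset on $\Omega=\mathbb{R}^K$ (Borel $\sigma$-algebra, natural filtration $\mathcal{F}_k=\sigma(r_1,\dots,r_k)$); wealth from investing amounts $\zeta_k$ ($\mathcal{F}_k$-measurable) in the risky asset is $X_k=p_0+\sum_{k'=0}^{k-1}\zeta_{k'}r_{k'+1}$, zero interest rate. For an uncertainty set $\mathcal{U}\subseteq\mathbb{R}^K$, the worst-case risk measure is $\rho(X)=\sup_{r\in\mathcal{U}}X(r)$, with one-step decomposition $\rho=\rho_0\circ\cdots\circ\rho_{K-1}$, where $\rho_k(X,r)=\sup_{r'\in\mathcal{U}:r'_{1:k}=r_{1:k}}X(r')$ if some $r'\in\mathcal{U}$ has $r'_{1:k}=r_{1:k}$, and otherwise $\rho_k(X,r)=X([r_{1:k};0_{k+1:K}])$ (understood as $\inf_{\epsilon>0}\operatorname{ess\,sup}$ over $r'$ with $r'_{1:k}=r_{1:k}$, $\|r'_{k+1:K}\|_\infty\le\epsilon$). Let $\rho_{k,K}=\rho_k\circ\cdots\circ\rho_{K-1}$. Bounded market risk: $0\ge\inf_{\zeta}\rho(-\sum_{k=0}^{K-1}\zeta_kr_{k+1})>-\infty$ (for coherent $\rho$ equivalently $=0$). Bounded conditional market risk: for each $k\in\{0,\dots,K-1\}$, $0\ge\inf_{\zeta_k,\dots,\zeta_{K-1}}\rho_{k,K}(-\sum_{\ell=k}^{K-1}\zeta_\ell r_{\ell+1})>-\infty$ a.s. (equal to $0$ when the conditional mappings are scale invariant, as here). *)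

From HB Require Import structures.
From mathcomp Require Import all_boot all_order all_algebra.
From mathcomp Require Import all_classical all_reals all_analysis.
Set Implicit Arguments. Unset Strict Implicit. Unset Printing Implicit Defensive.
Import Order.TTheory GRing.Theory Num.Theory.
Local Open Scope classical_set_scope.
Local Open Scope ring_scope.

Section Defs.
Variables (R : realType) (K : nat).

(* Sample space Omega = R^K ; coordinate i : 'I_K is the return r_{i+1}. *)
Definition Omega := 'I_K -> R.

(* 0-based access to coordinates by a natural number (0 outside range). *)
Definition ret (r : Omega) (l : nat) : R := oapp r 0 (insub l).

Definition logsum (r : Omega) (k : nat) : R :=
  \sum_(l < k) ln (1 + ret r l).

Definition tk (T : R) (k : nat) : R := k%:R * T / K%:R.

Definition zscore (mu sigma T : R) (r : Omega) (k k' : nat) : R :=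
  (logsum r k - mu * tk T k') / (sigma * Num.sqrt (tk T k')).

(* U_1 (the log(1 + r_l) in it is required to be defined: r_l > -1) *)
Definition U1 (mu sigma T Gamma : R) : set Omega :=
  [set r | (forall l : 'I_K, 0 < 1 + r l) /\
           (forall k, (1 <= k <= K)%N -> `|zscore mu sigma T r k k| <= Gamma)].

(* W: max_{k' in {k+1..K}} |...| - Gamma <= 0 for all k in {1..K};
   written as: every term of the max is <= Gamma. *)
Definition W (mu sigma T Gamma : R) : set Omega :=
  [set r | forall k, (1 <= k <= K)%N ->
     forall k', (k < k' <= K)%N -> `|zscore mu sigma T r k k'| <= Gamma].

Definition U1' (mu sigma T Gamma : R) : set Omega :=
  U1 mu sigma T Gamma `&` W mu sigma T Gamma.

(* sigma-algebra F_k = sigma(r_1, ..., r_k) on Omega *)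
Definition Fk (k : nat) : set (set Omega) :=
  <<s [set S : set Omega | exists (j : 'I_K) (A : set R),
          [/\ (j < k)%N, measurable A & S = (fun r : Omega => r j) @^-1` A]] >>.

Definition Fk_measurable (k : nat) (f : Omega -> R) : Prop :=
  forall B : set R, measurable B -> Fk k (f @^-1` B).

Definition strategy (zeta : nat -> Omega -> R) : Prop :=
  forall k, (k < K)%N -> Fk_measurable k (zeta k).

(* - sum_{l=k}^{K-1} zeta_l r_{l+1}  (here r_{l+1} is coordinate l) *)
Definition neg_gains (k : nat) (zeta : nat -> Omega -> R) : Omega -> \bar R :=
  fun r => (- \sum_(k <= l < K) zeta l r * ret r l)%:E.

Definition rho (U : set Omega) (X : Omega -> \bar R) : \bar R :=
  ereal_sup (X @` U).

Definition same_prefix (k : nat) (r r' : Omega) : Prop :=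
  forall i : 'I_K, (i < k)%N -> r' i = r i.

Definition trunc (k : nat) (r : Omega) : Omega :=
  fun i => if (i < k)%N then r i else 0.

Definition rho_k (U : set Omega) (k : nat) (X : Omega -> \bar R) : Omega -> \bar R :=
  fun r => if `[< exists2 r', U r' & same_prefix k r r' >]
           then ereal_sup (X @` [set r' | U r' /\ same_prefix k r r'])
           else X (trunc k r).

Definition rho_kK (U : set Omega) (k : nat) (X : Omega -> \bar R) : Omega -> \bar R :=
  foldr (fun j Y => rho_k U j Y) X (iota k (K - k)).

Definition bounded_market_risk (U : set Omega) : Prop :=
  let I := ereal_inf [set rho U (neg_gains 0 zeta) | zeta in strategy] in
  (I <= 0)%E /\ (-oo < I)%E.

(* bounded conditional market risk (stated for every r, hence a.s.) *)
Definition bounded_conditional_market_risk (U : set Omega) : Prop :=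
  forall k, (k < K)%N -> forall r : Omega,
    let I := ereal_inf [set rho_kK U k (neg_gains k zeta) r | zeta in strategy] in
    (I <= 0)%E /\ (-oo < I)%E.

End Defs.

From Pilot Require Import Defs.
From HB Require Import structures.
From mathcomp Require Import all_boot all_order all_algebra.
From mathcomp Require Import all_classical all_reals all_analysis.
From mathcomp Require Import ring.
Import Order.TTheory GRing.Theory Num.Theory.
Local Open Scope classical_set_scope.
Local Open Scope ring_scope.

(* The set U'_1 contains the zero return path and is stable under the
   truncations r |-> (r_1, ..., r_j, 0, ..., 0): truncating at j replaces the
   partial log-return sum at time k by the one at time min(k, j), which W
   (for j < k) and the hypothesis on Gamma (for the empty sum) control.  For a
   truncation-stable set each one-step conditional supremum at r dominates the
   value at r truncated at j, hence rho_{k,K}(X)(r) >= X(r truncated at k).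
   On paths truncated at k the gains from time k on vanish, so every strategy
   has (conditional) risk >= 0, and the zero strategy has risk exactly 0. *)

Section Truncation.
Set Implicit Arguments. Unset Strict Implicit.
Variables (R : realType) (K : nat).
Implicit Types (r : Omega R K) (i j k l : nat).

Lemma ret_trunc j r l : ret (trunc j r) l = if (l < j)%N then ret r l else 0.
Proof. by rewrite /ret; case: insubP => [i _ <-|_] /=; rewrite /trunc; case: ifP. Qed.

Lemma logsum_trunc j r k : logsum (trunc j r) k = logsum r (minn k j).
Proof.
rewrite /logsum; case: (leqP k j) => [hkj|hjk].
  by apply: eq_bigr => i _; rewrite ret_trunc (leq_trans (ltn_ord i) hkj).
rewrite -!(big_mkord xpredT (fun l => ln (1 + ret _ l))).
rewrite (@big_cat_nat _ _ _ j) ?(ltnW hjk) //= [X in _ + X]big1_seq ?addr0.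
  by apply: eq_big_nat => l /andP[_ hl]; rewrite ret_trunc hl.
move=> l /andP[_]; rewrite mem_index_iota => /andP[hjl _].
by rewrite ret_trunc ltnNge hjl addr0 ln1.
Qed.

Lemma trunc_id j r : (K <= j)%N -> trunc j r = r.
Proof. by move=> hKj; apply/funext => i; rewrite /trunc (leq_trans (ltn_ord i) hKj). Qed.

Lemma trunc_trunc i j r : (j <= i)%N -> trunc i (trunc j r) = trunc j r.
Proof.
move=> hji; apply/funext => l; rewrite /trunc.
by case: (ltnP l j) => [hlj|_]; [rewrite (leq_trans hlj hji) | case: ifP].
Qed.

Lemma same_prefix_trunc j r : Defs.same_prefix j r (trunc j r).
Proof. by move=> i hij; rewrite /trunc hij. Qed.

Lemma trunc_same_prefix j r r' : Defs.same_prefix j r r' -> trunc j r' = trunc j r.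
Proof. by move=> hrr'; apply/funext => i; rewrite /trunc; case: ifP => // /hrr'. Qed.

Lemma neg_gains_trunc k zeta r : neg_gains k zeta (trunc k r) = 0%E.
Proof.
rewrite /neg_gains big1_seq ?oppr0 // => l /andP[_].
by rewrite mem_index_iota => /andP[hkl _]; rewrite ret_trunc ltnNge hkl mulr0.
Qed.

Lemma neg_gains_cst0 k : neg_gains k (fun (_ : nat) (_ : Omega R K) => 0 : R) = cst 0%E.
Proof. by apply/funext => r; rewrite /neg_gains big1 ?oppr0 // => l _; rewrite mul0r. Qed.

Lemma Fk_measurable_cst k (c : R) : Fk_measurable k (cst c : Omega R K -> R).
Proof.
have [Fk0 FkD _] : sigma_algebra setT (Fk (R := R) (K := K) k).
  exact: smallest_sigma_algebra.
move=> B _; rewrite preimage_cst; case: ifP => _ //.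
by rewrite -(setD0 setT); exact: FkD.
Qed.

Lemma strategy_cst0 : strategy (fun (_ : nat) (_ : Omega R K) => 0 : R).
Proof. by move=> k _; exact: Fk_measurable_cst. Qed.

End Truncation.

Lemma ereal_sup_image_cst (R : realType) (T : Type) (A : set T) (x : \bar R) :
  A !=set0 -> ereal_sup (cst x @` A) = x.
Proof.
move=> [a Aa]; rewrite -[RHS]ereal_sup1; congr ereal_sup.
by apply/seteqP; split => y /=; [case=> ? _ <- | move=> ->; exists a].
Qed.

Section TruncationStableRisk.
Set Implicit Arguments. Unset Strict Implicit.
Variables (R : realType) (K : nat) (U : set (Omega R K)).
Implicit Types (r : Omega R K) (X Y : Omega R K -> \bar R).

Lemma rho_kK_recr j X : (j < K)%N -> rho_kK U j X = rho_k U j (rho_kK U j.+1 X).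
Proof. by move=> hjK; rewrite /rho_kK -subnSK. Qed.

Lemma rho_kK_id j X : (K <= j)%N -> rho_kK U j X = X.
Proof. by rewrite /rho_kK -subn_eq0 => /eqP ->. Qed.

Lemma rho_kK_cst k (x : \bar R) : rho_kK U k (cst x) = cst x.
Proof.
rewrite /rho_kK; elim: (iota _ _) => //= j s ->; apply/funext => r.
rewrite /rho_k; case: asboolP => // -[r' Ur' hrr'].
by apply: ereal_sup_image_cst; exists r'.
Qed.

Lemma rho_cst (x : \bar R) : U !=set0 -> rho U (cst x) = x.
Proof. exact: ereal_sup_image_cst. Qed.

Hypothesis U_trunc : forall j r, U r -> U (trunc j r).

Lemma rho_k_ge_trunc j Y r : (Y (trunc j r) <= rho_k U j Y r)%E.
Proof.
rewrite /rho_k; case: asboolP => // -[r' Ur' hrr'].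
apply: ereal_sup_ubound; exists (trunc j r'); last by rewrite (trunc_same_prefix hrr').
split; first exact: U_trunc.
by move=> i hij; rewrite (same_prefix_trunc r' hij); exact: hrr'.
Qed.

Lemma rho_kK_ge_trunc j X r : (X (trunc j r) <= rho_kK U j X r)%E.
Proof.
move Hn : (K - j)%N => n; elim: n j r Hn => [|n IH] j r.
  by move/eqP; rewrite subn_eq0 => hKj; rewrite rho_kK_id // trunc_id.
move=> hn; have hjK : (j < K)%N by rewrite -subn_gt0 hn.
rewrite rho_kK_recr //; apply: le_trans (rho_k_ge_trunc _ _ _).
by rewrite -{1}(trunc_trunc r (leqnSn j)) IH // subnS hn.
Qed.

Lemma rho_kK_neg_gains_ge0 k zeta r : (0 <= rho_kK U k (neg_gains k zeta) r)%E.
Proof. by rewrite -(neg_gains_trunc k zeta r); exact: rho_kK_ge_trunc. Qed.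

Lemma rho_neg_gains_ge0 zeta : U !=set0 -> (0 <= rho U (neg_gains 0 zeta))%E.
Proof.
move=> [r Ur]; rewrite -(neg_gains_trunc 0 zeta r).
by apply: ereal_sup_ubound; exists (trunc 0 r) => //; exact: U_trunc.
Qed.

Theorem trunc_stable_bounded_risk :
  U !=set0 -> bounded_market_risk U /\ bounded_conditional_market_risk U.
Proof.
move=> U0; have inf_ge0 (S : set (\bar R)) : lbound S 0%E -> (-oo < ereal_inf S)%E.
  by move=> S_ge0; apply: lt_le_trans (le_ereal_inf_tmp S_ge0); exact: ltNyr.
split; [split | move=> k _ r; split].
- apply: ge_ereal_inf; exists 0%E => //; exists (fun _ _ => 0); first exact: strategy_cst0.
  by rewrite neg_gains_cst0 rho_cst.
- by apply: inf_ge0 => _ [zeta _ <-]; exact: rho_neg_gains_ge0.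
- apply: ge_ereal_inf; exists 0%E => //; exists (fun _ _ => 0); first exact: strategy_cst0.
  by rewrite neg_gains_cst0 rho_kK_cst.
- by apply: inf_ge0 => _ [zeta _ <-]; exact: rho_kK_neg_gains_ge0.
Qed.

End TruncationStableRisk.

Section UncertaintySetU1'.
Set Implicit Arguments. Unset Strict Implicit.
Variables (R : realType) (K : nat) (mu sigma T Gamma : R).
Hypotheses (hmu : 0 < mu) (hsigma : 0 < sigma) (hT : 0 < T).
Hypothesis hcond : forall k : nat, (1 <= k <= K)%N ->
  mu * Num.sqrt (tk K T k) / sigma <= Gamma.
Implicit Types (r : Omega R K) (j k : nat).

Lemma tk_gt0 k : (1 <= k <= K)%N -> 0 < tk K T k.
Proof.
case/andP=> hk1 hkK; rewrite /tk divr_gt0 ?mulr_gt0 // ltr0n //.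
exact: leq_trans hkK.
Qed.

Lemma zscore0_le r k' : (1 <= k' <= K)%N -> `|zscore mu sigma T r 0 k'| <= Gamma.
Proof.
move=> hk'; have t_gt0 := tk_gt0 hk'; have st_gt0 : 0 < Num.sqrt (tk K T k').
  by rewrite sqrtr_gt0.
have -> : `|zscore mu sigma T r 0 k'| = mu * Num.sqrt (tk K T k') / sigma.
  rewrite /zscore /logsum big_ord0 sub0r mulNr normrN ger0_norm; last first.
    by apply: divr_ge0; apply: mulr_ge0; exact: ltW.
  set s := Num.sqrt _; rewrite -[X in mu * X](sqr_sqrtr (ltW t_gt0)) -/s.
  by field; rewrite !gt_eqF.
exact: hcond.
Qed.

Lemma U1'_zscore_le r j k' :
  U1' mu sigma T Gamma r -> (j < k' <= K)%N -> `|zscore mu sigma T r j k'| <= Gamma.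
Proof.
case=> _ hW /andP[hjk' hk'K]; case: j hjk' => [|j] hjk'.
  by apply: zscore0_le; rewrite hjk'.
by apply: hW; rewrite ?hjk' ?hk'K // (leq_trans (ltnW hjk')).
Qed.

Lemma U1'_trunc j r : U1' mu sigma T Gamma r -> U1' mu sigma T Gamma (trunc j r).
Proof.
move=> hr; have zscore_trunc k k' :
    zscore mu sigma T (trunc j r) k k' = zscore mu sigma T r (minn k j) k'.
  by rewrite /zscore logsum_trunc.
case: (hr) => [[hpos hU] hW]; split; [split|].
- by move=> l; rewrite /trunc; case: ifP; rewrite ?addr0.
- move=> k hk; rewrite zscore_trunc; case: (leqP k j) => hkj; first exact: hU.
  by apply: U1'_zscore_le hr _; rewrite hkj; case/andP: hk.
- move=> k hk k' hkk'; rewrite zscore_trunc; case: (leqP k j) => hkj.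
    exact: hW.
  apply: U1'_zscore_le hr _; case/andP: hkk' => hkk' ->.
  by rewrite (ltn_trans hkj hkk').
Qed.

Lemma U1'_zero_path : U1' mu sigma T Gamma (fun _ : 'I_K => 0).
Proof.
have zscore_zero k k' : zscore mu sigma T (fun _ : 'I_K => 0) k k' =
    zscore mu sigma T (fun _ : 'I_K => 0) 0 k'.
  rewrite /zscore /logsum big_ord0 big1 // => l _.
  by rewrite /ret; case: insubP => [i _ _|_] /=; rewrite addr0 ln1.
split; [split|].
- by move=> l; rewrite addr0.
- by move=> k hk; rewrite zscore_zero; exact: zscore0_le.
- move=> k /andP[hk1 _] k' /andP[hkk' hk'K]; rewrite zscore_zero zscore0_le //.
  by rewrite hk'K (leq_trans hk1 (ltnW hkk')).
Qed.

End UncertaintySetU1'.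

Theorem lemma5 (R : realType) (mu sigma T Gamma : R) (K : nat)
  (hmu : 0 < mu) (hsigma : 0 < sigma) (hT : 0 < T) (hGamma : 0 < Gamma)
  (hcond : forall k : nat, (1 <= k <= K)%N ->
             mu * Num.sqrt (k%:R * T / K%:R) / sigma <= Gamma) :
  bounded_market_risk (@U1' R K mu sigma T Gamma) /\
  bounded_conditional_market_risk (@U1' R K mu sigma T Gamma).
Proof.
apply: trunc_stable_bounded_risk => [j r|].
  exact: U1'_trunc.
by exists (fun _ => 0); exact: U1'_zero_path.
Qed.
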